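(* The Nield-Kuznetsov function $N_{W}(a,x)$ and the complementary version $\hat N_W(a,x)$ are related by \[ N_{W}(a,x)=c_{0}^{+}(a)W(a,x)+c_{0}^{-}(a)W(a,-x)-\hat{N}_{W}(a,x), \] where \[ c_{0}^{\pm}(a)=\mp \hat{N}_{W}'(a,0)W(a,0) - \hat{N}_{W}(a,0)W'(a,0). \]
   Context: $a$ is real; $W(a,\pm x)$ are the Weber parabolic cylinder functions (DLMF Sect. 12.14), numerically satisfactory solutions of $y''+(\tfrac14 x^2-a)y=0$, with $W(a,0)W'(a,0)=-\tfrac12$. The Nield-Kuznetsov function of the first kind is $N_{W}(a,x)=W(a,x) \int_{0}^x W(a,-t)dt-W(a,-x)\int_{0}^x W(a,t)dt$, a solution of $y''+(\tfrac14 x^2-a)y=-1$ with $N_W(a,0)=N_W'(a,0)=0$. The complementary Nield-Kuznetsov function is $\hat{N}_{W}(a,x)=W(a,x)\int_{x}^{\infty} W(a,-t)dt-W(a,-x) \int_{x}^{\infty} W(a,t)dt$, whose negative also solves $y''+(\tfrac14 x^2-a)y=-1$. The solution of this inhomogeneous equation with $y(a,0)=\alpha$, $y'(a,0)=\beta$ is $y=C^{+}W(a,x)+C^{-}W(a,-x)+N_W(a,x)$ with $C^{\pm}=\mp\beta W(a,0)-\alpha W'(a,0)$. *)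

From Stdlib Require Import Reals Factorial.
From Coquelicot Require Import Coquelicot.
Open Scope R_scope.

(* |Gamma(s + i y)| for s > 0, via Euler's integral
   Gamma(z) = int_0^oo t^(z-1) e^(-t) dt, t^(i y) = cos(y ln t) + i sin(y ln t). *)
Definition Gamma_re (s y : R) : R :=
  RInt_gen (fun t => Rpower t (s - 1) * exp (- t) * cos (y * ln t))
           (at_right 0) (Rbar_locally p_infty).
Definition Gamma_im (s y : R) : R :=
  RInt_gen (fun t => Rpower t (s - 1) * exp (- t) * sin (y * ln t))
           (at_right 0) (Rbar_locally p_infty).
Definition Gamma_abs (s y : R) : R :=
  sqrt (Gamma_re s y ^ 2 + Gamma_im s y ^ 2).

(* DLMF 12.14.8 coefficients: pair n = (alpha_n, alpha_{n+1}),
   alpha_0 = 1, alpha_1 = a, alpha_{n+2} = a alpha_{n+1} - (n+1)(2n+1)/2 alpha_n *)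
Fixpoint alpha_pair (a : R) (n : nat) : R * R :=
  match n with
  | O => (1, a)
  | S m => let (p, q) := alpha_pair a m in
           (q, a * q - / 2 * INR (m + 1) * INR (2 * m + 1) * p)
  end.
Definition alpha (a : R) (n : nat) : R := fst (alpha_pair a n).

Fixpoint beta_pair (a : R) (n : nat) : R * R :=
  match n with
  | O => (1, a)
  | S m => let (p, q) := beta_pair a m in
           (q, a * q - / 2 * INR (m + 1) * INR (2 * m + 3) * p)
  end.
Definition beta (a : R) (n : nat) : R := fst (beta_pair a n).

(* DLMF 12.14.7: even and odd solutions *)
Definition y1 (a x : R) : R :=
  Series (fun n => alpha a n * x ^ (2 * n) / INR (Factorial.fact (2 * n))).
Definition y2 (a x : R) : R :=
  Series (fun n => beta a n * x ^ (2 * n + 1) / INR (Factorial.fact (2 * n + 1))).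

(* DLMF 12.14.9: G1 = |Gamma(1/4 + i a/2)|, G3 = |Gamma(3/4 + i a/2)|,
   W(a, x) = 2^(-3/4) (sqrt(G1/G3) y1(a,x) - sqrt(2 G3/G1) y2(a,x)).
   (W(a,-x) is then obtained by evaluating at -x, since y1 is even, y2 odd.) *)
Definition G1 (a : R) : R := Gamma_abs (/4) (a / 2).
Definition G3 (a : R) : R := Gamma_abs (3/4) (a / 2).

Definition W (a x : R) : R :=
  Rpower 2 (- (3/4)) *
  (sqrt (G1 a / G3 a) * y1 a x - sqrt (2 * G3 a / G1 a) * y2 a x).

Definition NW (a x : R) : R :=
  W a x * RInt (fun t => W a (- t)) 0 x - W a (- x) * RInt (fun t => W a t) 0 x.

Definition NWhat (a x : R) : R :=
  W a x * RInt_gen (fun t => W a (- t)) (at_point x) (Rbar_locally p_infty)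
  - W a (- x) * RInt_gen (fun t => W a t) (at_point x) (Rbar_locally p_infty).

Definition c0p (a : R) : R :=
  - Derive (NWhat a) 0 * W a 0 - NWhat a 0 * Derive (W a) 0.
Definition c0m (a : R) : R :=
  Derive (NWhat a) 0 * W a 0 - NWhat a 0 * Derive (W a) 0.

(* W(a,.) is an entire solution of y'' + (x^2/4 - a) y = 0: the numbers alpha_n, beta_n obey
   two-term recurrences and grow at most like K^n n!, so the Taylor coefficients
   alpha_n / (2n)! and beta_n / (2n+1)! decay like K^n / n!.
   Every solution y of this equation has a convergent integral over [0, oo): with q = t^2/4 - a,
   the energy y'^2/q + y^2 is nonincreasing for large t, so y = O(1) and y'^2 = O(q), and
   y = -(y'/q + t y/(2 q^2))' + O(1/t^2). Writing L+ and L- for the integrals of W(a,t) and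
   W(a,-t) over [0, oo), the complementary function is L- W(a,x) - L+ W(a,-x) - N_W(a,x).
   Since N_W(a,0) = N_W'(a,0) = 0, the Wronskian W(a,0) W'(a,0) = -1/2 turns the initial data
   of this function into c0+ = L- and c0- = -L+. *)

From Stdlib Require Import Reals Lra Lia Psatz Factorial Classical.
From Coquelicot Require Import Coquelicot.
Open Scope R_scope.

Lemma ex_derive_continuous_R (f : R -> R) (x : R) : ex_derive f x -> continuous f x.
Proof. exact (ex_derive_continuous f x). Qed.

Lemma is_derive_continuous (f : R -> R) (x l : R) : is_derive f x l -> continuous f x.
Proof. intros Hf. apply ex_derive_continuous_R. exists l. exact Hf. Qed.

Lemma is_derive_Rmult (f g : R -> R) (x df dg : R) :
  is_derive f x df -> is_derive g x dg ->
  is_derive (fun t => f t * g t) x (df * g x + f x * dg).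
Proof. intros Hf Hg. apply (is_derive_mult f g x df dg Hf Hg). intros; apply Rmult_comm. Qed.

Lemma is_derive_linear (k x : R) : is_derive (fun t : R => k * t) x k.
Proof. auto_derive; [trivial | ring]. Qed.

Lemma le_of_derive_nonpos (f df : R -> R) (T : R) :
  (forall t, T <= t -> is_derive f t (df t)) -> (forall t, T <= t -> df t <= 0) ->
  forall t, T <= t -> f t <= f T.
Proof.
  intros Hd Hneg t Ht.
  destruct (MVT_gen f T t df) as [c [Hc Hmvt]].
  - intros x Hx. rewrite Rmin_left in Hx by lra. apply Hd. lra.
  - intros x Hx. rewrite Rmin_left, Rmax_right in Hx by lra.
    apply continuity_pt_filterlim. eapply is_derive_continuous, Hd. lra.
  - rewrite Rmin_left, Rmax_right in Hc by lra.
    pose proof (Hneg c (proj1 Hc)). nra.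
Qed.

Lemma ex_RInt_continuous_R (f : R -> R) (u v : R) : u <= v ->
  (forall t, u <= t <= v -> continuous f t) -> ex_RInt f u v.
Proof.
  intros Huv Hc. apply (ex_RInt_continuous (V := R_CompleteNormedModule)).
  intros z Hz. rewrite Rmin_left, Rmax_right in Hz by lra. apply Hc, Hz.
Qed.

Lemma ex_RInt_of_continuous (f : R -> R) (u v : R) : (forall t, continuous f t) ->
  ex_RInt f u v.
Proof. intros Hc. apply (ex_RInt_continuous (V := R_CompleteNormedModule)). intros; apply Hc. Qed.

Lemma RInt_point_R (f : R -> R) (u : R) : RInt f u u = 0.
Proof. exact (RInt_point u f). Qed.

Lemma is_derive_RInt_from_0 (f : R -> R) (x : R) : (forall t, continuous f t) ->
  is_derive (fun b => RInt f 0 b) x (f x).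
Proof.
  intros Hc. apply (is_derive_RInt f (fun b => RInt f 0 b) 0 x); [|apply Hc].
  apply filter_forall. intros b.
  apply (RInt_correct (V := R_CompleteNormedModule)), ex_RInt_of_continuous, Hc.
Qed.

Lemma is_RInt_inv_sq (K u v : R) : 0 < u -> 0 < v ->
  is_RInt (fun t => K / t ^ 2) u v (K / u - K / v).
Proof.
  intros Hu Hv.
  replace (K / u - K / v) with (minus (- K / v) (- K / u))
    by (unfold minus, plus, opp; simpl; field; lra).
  apply (is_RInt_derive (fun t => - K / t)).
  - intros x Hx. assert (0 < x) by (apply Rlt_le_trans with (Rmin u v); [apply Rmin_glb_lt|]; lra).
    auto_derive; [lra | field; lra].
  - intros x Hx. assert (0 < x) by (apply Rlt_le_trans with (Rmin u v); [apply Rmin_glb_lt|]; lra).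
    apply ex_derive_continuous_R. auto_derive. nra.
Qed.

Lemma is_lim_div_p_infty (K : R) : is_lim (fun b => K / b) p_infty 0.
Proof.
  replace (Finite 0) with (Rbar_mult K (Rbar_inv p_infty)) by (simpl; f_equal; ring).
  apply is_lim_scal_l, is_lim_inv; [apply is_lim_id | discriminate].
Qed.

Lemma ex_lim_nondecreasing_bounded (F : R -> R) (T B : R) :
  (forall u v, T <= u -> u <= v -> F u <= F v) -> (forall u, T <= u -> F u <= B) ->
  exists L : R, is_lim F p_infty L.
Proof.
  intros Hmono Hbnd.
  set (E := fun z => exists u, T <= u /\ z = F u).
  assert (HE : bound E) by (exists B; intros z [u [Hu ->]]; apply Hbnd, Hu).
  assert (HE' : exists z, E z) by (exists (F T), T; split; [lra | reflexivity]).
  destruct (completeness E HE HE') as [L [Hub Hlub]].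
  exists L. apply is_lim_spec. intros eps. simpl.
  destruct (classic (exists u, T <= u /\ L - eps < F u)) as [[u [Hu Hlt]] | Hnone].
  - exists u. intros x Hx.
    assert (F u <= F x) by (apply Hmono; lra).
    assert (F x <= L) by (apply Hub; exists x; split; [lra | reflexivity]).
    apply Rabs_def1; destruct eps; simpl in *; lra.
  - exfalso.
    assert (L <= L - eps).
    { apply Hlub. intros z [u [Hu ->]]. apply Rnot_lt_le. intros Hlt. apply Hnone. eauto. }
    destruct eps; simpl in *; lra.
Qed.

Section InverseSquareBound.

Variables (f : R -> R) (T K : R).
Hypothesis T_pos : 0 < T.
Hypothesis f_continuous : forall t, T <= t -> continuous f t.
Hypothesis f_bound : forall t, T <= t -> Rabs (f t) <= K / t ^ 2.

Lemma ex_RInt_tail (u v : R) : T <= u -> u <= v -> ex_RInt f u v.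
Proof. intros Hu Huv. apply ex_RInt_continuous_R; [lra|]. intros t Ht. apply f_continuous. lra. Qed.

Lemma Rabs_RInt_tail_le (u v : R) : T <= u -> u <= v -> Rabs (RInt f u v) <= K / u - K / v.
Proof.
  intros Hu Huv.
  assert (Hk : is_RInt (fun t => K / t ^ 2) u v (K / u - K / v)) by (apply is_RInt_inv_sq; lra).
  assert (Hmk : is_RInt (fun t => - (K / t ^ 2)) u v (- (K / u - K / v)))
    by exact (is_RInt_opp _ _ _ _ Hk).
  assert (Hbetween : forall t, u < t < v -> - (K / t ^ 2) <= f t <= K / t ^ 2)
    by (intros t Ht; apply Rabs_le_between, f_bound; lra).
  apply Rabs_le. split.
  - rewrite <- (is_RInt_unique _ _ _ _ Hmk).
    apply RInt_le; [lra | eexists; exact Hmk | apply ex_RInt_tail; lra |].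
    intros t Ht. apply Hbetween, Ht.
  - rewrite <- (is_RInt_unique _ _ _ _ Hk).
    apply RInt_le; [lra | apply ex_RInt_tail; lra | eexists; exact Hk |].
    intros t Ht. apply Hbetween, Ht.
Qed.

Lemma ex_lim_RInt_tail : exists L : R, is_lim (fun b => RInt f T b) p_infty L.
Proof.
  assert (HK : 0 <= K).
  { pose proof (f_bound T (Rle_refl T)) as HfT. pose proof (Rabs_pos (f T)).
    apply (Rmult_le_reg_r (/ T ^ 2)); [apply Rinv_0_lt_compat, pow_lt, T_pos|]. lra. }
  (* G is nondecreasing because f >= - K / t^2, the derivative of K / t. *)
  set (G := fun b => RInt f T b - K / b).
  destruct (ex_lim_nondecreasing_bounded G T (K / T)) as [L HL].
  - intros u v Hu Huv. unfold G.
    rewrite <- (RInt_Chasles f T u v) by (apply ex_RInt_tail; lra).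
    pose proof (Rabs_RInt_tail_le u v Hu Huv) as Huv'. apply Rabs_le_between in Huv'.
    unfold plus; simpl. lra.
  - intros u Hu. unfold G.
    pose proof (Rabs_RInt_tail_le T u (Rle_refl T) Hu) as HTu. apply Rabs_le_between in HTu.
    assert (0 <= K / u) by (apply Rmult_le_pos; [lra | apply Rlt_le, Rinv_0_lt_compat; lra]).
    lra.
  - exists L.
    apply (is_lim_ext (fun b => G b + K / b)); [intros b; unfold G; ring|].
    replace (Finite L) with (Rbar_plus L 0) by (simpl; f_equal; ring).
    apply is_lim_plus'; [exact HL | apply is_lim_div_p_infty].
Qed.

End InverseSquareBound.

Lemma is_RInt_gen_of_lim (f : R -> R) (L : R) : (forall t, continuous f t) ->
  is_lim (fun b => RInt f 0 b) p_infty L ->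
  forall x, is_RInt_gen f (at_point x) (Rbar_locally p_infty) (L - RInt f 0 x).
Proof.
  intros Hc HL x.
  assert (Hex : forall u v, ex_RInt f u v) by (intros; apply ex_RInt_of_continuous, Hc).
  assert (HLx : is_lim (fun b => RInt f 0 b - RInt f 0 x) p_infty (L - RInt f 0 x))
    by (eapply is_lim_minus; [exact HL | apply is_lim_const | reflexivity]).
  intros P HP.
  apply (Filter_prod _ _ _ (fun u => u = x) (fun b => P (RInt f 0 b - RInt f 0 x))).
  - reflexivity.
  - exact (HLx P HP).
  - intros u b -> Hb. exists (RInt f x b). split.
    + exact (RInt_correct (V := R_CompleteNormedModule) f x b (Hex x b)).
    + rewrite <- (RInt_Chasles f 0 x b (Hex 0 x) (Hex x b)) in Hb.
      unfold plus in Hb; simpl in Hb.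
      replace (RInt f x b) with (RInt f 0 x + RInt f x b - RInt f 0 x) by ring. exact Hb.
Qed.

Lemma Rabs_le_of_sq_le (u v : R) : 0 <= v -> u ^ 2 <= v ^ 2 -> Rabs u <= v.
Proof.
  intros Hv H. destruct (Rle_or_lt (Rabs u) v) as [|Hlt]; [assumption|].
  rewrite <- (pow2_abs u) in H. pose proof (Rabs_pos u). nra.
Qed.

Lemma Rabs_div_le_of_sq_le (v Q b C : R) : 1 <= b -> b ^ 2 / 8 <= Q -> 0 <= C ->
  v ^ 2 <= C * Q -> Rabs (v / Q) <= (8 * C + 1) / b.
Proof.
  intros Hb HQ HC Hv.
  assert (HQ0 : 0 < Q) by nra.
  set (w := v / Q).
  assert (Hw2 : w ^ 2 * Q <= C).
  { apply (Rmult_le_reg_r Q); [lra|]. unfold w. replace (v / Q) with (v * / Q) by reflexivity.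
    replace ((v * / Q) ^ 2 * Q * Q) with (v ^ 2) by (field; lra). nra. }
  assert (Hwb : (w * b) ^ 2 <= 8 * C).
  { assert (0 <= w ^ 2 * (8 * Q - b ^ 2)) by (apply Rmult_le_pos; nra).
    replace ((w * b) ^ 2) with (w ^ 2 * b ^ 2) by ring. lra. }
  assert (Habs : Rabs (w * b) <= 8 * C + 1) by (apply Rabs_le_of_sq_le; nra).
  rewrite Rabs_mult, (Rabs_pos_eq b) in Habs by lra.
  apply (Rmult_le_reg_r b); [lra|]. unfold Rdiv. rewrite Rmult_assoc, Rinv_l by lra. lra.
Qed.

Lemma Rabs_div_sq_le (u Q b M : R) : 1 <= b -> b ^ 2 / 8 <= Q -> Rabs u <= M ->
  Rabs (u * (b / 2) / Q ^ 2) <= 32 * M / b.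
Proof.
  intros Hb HQ Hu.
  assert (HQ0 : 0 < Q) by nra.
  assert (HM : 0 <= M) by (pose proof (Rabs_pos u); lra).
  rewrite Rabs_div by (apply pow_nonzero; lra).
  rewrite Rabs_mult, (Rabs_pos_eq (b / 2)), (Rabs_pos_eq (Q ^ 2)) by (try apply pow_le; lra).
  apply (Rmult_le_reg_r (Q ^ 2 * b)); [apply Rmult_lt_0_compat; [apply pow_lt|]; lra|].
  replace (Rabs u * (b / 2) / Q ^ 2 * (Q ^ 2 * b)) with (Rabs u * b * b / 2) by (field; lra).
  replace (32 * M / b * (Q ^ 2 * b)) with (32 * M * Q ^ 2) by (field; lra).
  assert (HQ2 : (b ^ 2 / 8) ^ 2 <= Q ^ 2) by (apply pow_incr; split; nra).
  assert (Hbb : 1 <= b * b) by nra.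
  assert (Hb4 : b * b <= b ^ 4) by (replace (b ^ 4) with ((b * b) * (b * b)) by ring; nra).
  assert (Rabs u * (b * b) <= M * (b * b)) by (apply Rmult_le_compat_r; nra).
  assert (M * (b * b) <= M * b ^ 4) by (apply Rmult_le_compat_l; nra).
  nra.
Qed.

Lemma Rabs_mul_div_cube_le (u Q t M : R) : 1 <= t -> t ^ 2 / 8 <= Q -> Rabs u <= M ->
  Rabs (u * ((Q / 2 - t ^ 2 / 2) / Q ^ 3)) <= 288 * M / t ^ 2.
Proof.
  intros Ht HQ Hu.
  assert (HQ0 : 0 < Q) by nra.
  assert (HM : 0 <= M) by (pose proof (Rabs_pos u); lra).
  rewrite Rabs_mult, Rabs_div by (apply pow_nonzero; lra).
  rewrite (Rabs_pos_eq (Q ^ 3)) by (apply pow_le; lra).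
  assert (Hnum : Rabs (Q / 2 - t ^ 2 / 2) <= 9 * Q / 2) by (apply Rabs_le; split; nra).
  apply (Rmult_le_reg_r (Q ^ 3 * t ^ 2)); [apply Rmult_lt_0_compat; apply pow_lt; lra|].
  replace (Rabs u * (Rabs (Q / 2 - t ^ 2 / 2) / Q ^ 3) * (Q ^ 3 * t ^ 2))
    with (Rabs u * Rabs (Q / 2 - t ^ 2 / 2) * t ^ 2) by (field; lra).
  replace (288 * M / t ^ 2 * (Q ^ 3 * t ^ 2)) with (288 * M * Q ^ 3) by (field; nra).
  assert (H1 : Rabs u * Rabs (Q / 2 - t ^ 2 / 2) <= M * (9 * Q / 2))
    by (apply Rmult_le_compat; try apply Rabs_pos; lra).
  assert (H2 : Rabs u * Rabs (Q / 2 - t ^ 2 / 2) * t ^ 2 <= M * (9 * Q / 2) * (8 * Q))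
    by (apply Rmult_le_compat; try nra; apply Rmult_le_pos; apply Rabs_pos).
  assert (H3 : M * (9 * Q / 2) * (8 * Q) <= 288 * M * Q ^ 3).
  { replace (288 * M * Q ^ 3) with (36 * M * Q * Q * (8 * Q)) by ring.
    replace (M * (9 * Q / 2) * (8 * Q)) with (36 * M * Q * Q * 1) by field.
    assert (0 <= 36 * M * Q * Q) by (repeat apply Rmult_le_pos; lra).
    apply Rmult_le_compat_l; nra. }
  lra.
Qed.

Lemma Rabs_recurrence_le (a p q c C : R) : 0 <= c <= C ->
  Rabs (a * q - c * p) <= Rabs a * Rabs q + C * Rabs p.
Proof.
  intros Hc. unfold Rminus. eapply Rle_trans; [apply Rabs_triang|].
  rewrite Rabs_Ropp, !Rabs_mult, (Rabs_pos_eq c) by lra.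
  pose proof (Rabs_pos p). nra.
Qed.

Lemma fact_sq_le_fact_double (n : nat) : (fact n * fact n <= fact (2 * n))%nat.
Proof.
  induction n as [|n IH]; [simpl; lia|].
  replace (2 * S n)%nat with (S (S (2 * n))) by lia.
  change (fact (S (S (2 * n)))) with (S (S (2 * n)) * (S (2 * n) * fact (2 * n)))%nat.
  change (fact (S n)) with (S n * fact n)%nat.
  assert (H : (S n * S n <= S (S (2 * n)) * S (2 * n))%nat) by nia.
  pose proof (Nat.mul_le_mono _ _ _ _ H IH). nia.
Qed.

Lemma Rabs_div_fact_sq_le (u F K : R) (n : nat) :
  Rabs u <= K ^ n * INR (fact n) -> INR (fact n) * INR (fact n) <= F ->
  Rabs (u / F) <= K ^ n / INR (fact n).
Proof.
  intros Hu HF. pose proof (INR_fact_lt_0 n) as Hn.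
  assert (HF0 : 0 < F) by nra.
  rewrite Rabs_div, (Rabs_pos_eq F) by lra.
  apply Rle_trans with (K ^ n * INR (fact n) / (INR (fact n) * INR (fact n))).
  - apply Rle_trans with (K ^ n * INR (fact n) / F).
    + apply Rmult_le_compat_r; [apply Rlt_le, Rinv_0_lt_compat|]; lra.
    + apply Rmult_le_compat_l; [pose proof (Rabs_pos u); lra|].
      apply Rinv_le_contravar; nra.
  - right. field. lra.
Qed.

Lemma INR_fact_SS (n : nat) :
  INR (fact (S (S n))) = (INR n + 2) * (INR n + 1) * INR (fact n).
Proof.
  change (fact (S (S n))) with (S (S n) * (S n * fact n))%nat.
  rewrite !mult_INR, !S_INR. ring.
Qed.

(** * Entire power series *)

Lemma CV_radius_le_of_Rabs_le (a b : nat -> R) :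
  (forall n, Rabs (a n) <= Rabs (b n)) -> Rbar_le (CV_radius b) (CV_radius a).
Proof.
  intros Hab.
  refine (is_lub_Rbar_subset _ _ _ _ _ (CV_radius_bounded a) (CV_radius_bounded b)).
  intros r [M HM]. exists M. intros n.
  eapply Rle_trans; [|apply HM]. rewrite !Rabs_mult.
  apply Rmult_le_compat_r; [apply Rabs_pos | apply Hab].
Qed.

Lemma CV_radius_exp_coef (K : R) : 0 < K ->
  CV_radius (fun n => K ^ n / INR (fact n)) = p_infty.
Proof.
  intros HK. apply CV_radius_infinite_DAlembert.
  - intros n. apply Rmult_integral_contrapositive_currified.
    + apply pow_nonzero; lra.
    + apply Rinv_neq_0_compat, INR_fact_neq_0.
  - apply (is_lim_seq_ext (fun n => K * / INR (S n))).
    + intros n. pose proof (INR_fact_lt_0 n). pose proof (pow_lt K n HK).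
      pose proof (lt_0_INR (S n) (Nat.lt_0_succ n)).
      change (fact (S n)) with (S n * fact n)%nat. rewrite mult_INR.
      change (K ^ S n) with (K * K ^ n).
      rewrite Rabs_pos_eq; [field; repeat split; lra|].
      apply Rlt_le, Rdiv_lt_0_compat; apply Rdiv_lt_0_compat; nra.
    + replace (Finite 0) with (Rbar_mult K 0) by (simpl; f_equal; ring).
      apply is_lim_seq_scal_l.
      replace (Finite 0) with (Rbar_inv p_infty) by reflexivity.
      apply is_lim_seq_inv; [|discriminate].
      apply (is_lim_seq_incr_1 INR), is_lim_seq_INR.
Qed.

Lemma CV_radius_infinite_of_exp_bound (c : nat -> R) (K : R) : 0 < K ->
  (forall n, Rabs (c n) <= K ^ n / INR (fact n)) -> CV_radius c = p_infty.
Proof.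
  intros HK Hc.
  assert (Hle : Rbar_le (CV_radius (fun n => K ^ n / INR (fact n))) (CV_radius c)).
  { apply CV_radius_le_of_Rabs_le. intros n.
    rewrite (Rabs_pos_eq (_ / _)); [apply Hc|].
    apply Rlt_le, Rdiv_lt_0_compat; [apply pow_lt; lra | apply INR_fact_lt_0]. }
  rewrite CV_radius_exp_coef in Hle by exact HK.
  destruct (CV_radius c); simpl in Hle; easy.
Qed.

Lemma two_term_recurrence_growth (u : nat -> R) (K : R) : 2 <= K ->
  Rabs (u 0%nat) <= 1 -> Rabs (u 1%nat) <= K ->
  (forall m, Rabs (u (S (S m))) <= (K - 2) * Rabs (u (S m)) + 2 * INR (S m) ^ 2 * Rabs (u m)) ->
  forall n, Rabs (u n) <= K ^ n * INR (fact n).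
Proof.
  intros HK H0 H1 Hrec.
  assert (Hpair : forall n, Rabs (u n) <= K ^ n * INR (fact n)
                        /\ Rabs (u (S n)) <= K ^ S n * INR (fact (S n))).
  { induction n as [|n [IHn IHSn]]; [simpl; lra|].
    split; [exact IHSn|].
    change (fact (S (S n))) with (S (S n) * (S n * fact n))%nat.
    change (fact (S n)) with (S n * fact n)%nat in IHSn.
    change (K ^ S (S n)) with (K * (K * K ^ n)).
    change (K ^ S n) with (K * K ^ n) in IHSn.
    rewrite !mult_INR, !S_INR in *.
    set (X := K ^ n * INR (fact n)) in *.
    assert (HX : 0 <= X) by (apply Rle_trans with (Rabs (u n)); [apply Rabs_pos | exact IHn]).
    pose proof (pos_INR n) as Hn.
    specialize (Hrec n). rewrite S_INR in Hrec.
    assert (Hq : (K - 2) * Rabs (u (S n)) <= (K - 2) * (K * X * (INR n + 1))).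
    { apply Rmult_le_compat_l; [lra|]. apply (Rle_trans _ _ _ IHSn); right; unfold X; ring. }
    assert (Hp : 2 * (INR n + 1) ^ 2 * Rabs (u n) <= 2 * (INR n + 1) ^ 2 * X).
    { apply Rmult_le_compat_l; [nra | exact IHn]. }
    assert (Hgap : 0 <= (INR n + 1) * X * ((K * K - 2) * (INR n + 1) + 2 * K)).
    { assert (HKK : 4 <= K * K) by nra.
      apply Rmult_le_pos; [apply Rmult_le_pos; lra|]. nra. }
    apply (Rle_trans _ _ _ Hrec).
    replace (K * (K * K ^ n) * ((INR n + 1 + 1) * ((INR n + 1) * INR (fact n))))
      with (K * K * X * (INR n + 2) * (INR n + 1)) by (unfold X; ring).
    nra. }
  intros n. apply Hpair.
Qed.

Lemma is_series_PSeries_entire (c : nat -> R) (u : R) : CV_radius c = p_infty ->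
  is_series (fun n => c n * u ^ n) (PSeries c u).
Proof.
  intros Hc. apply Series_correct, ex_pseries_R, CV_radius_inside. rewrite Hc. exact I.
Qed.

Lemma PSeries_ode_of_coef (c : nat -> R) (k a : R) : CV_radius c = p_infty ->
  (forall n, k * PS_derive c n + 4 * PS_incr_1 (PS_derive (PS_derive c)) n
             + / 4 * PS_incr_1 c n - a * c n = 0) ->
  forall u, k * PSeries (PS_derive c) u + 4 * (u * PSeries (PS_derive (PS_derive c)) u)
            = - (u / 4 - a) * PSeries c u.
Proof.
  intros Hc Hcoef u.
  assert (H1 : CV_radius (PS_derive c) = p_infty) by (rewrite CV_radius_derive; exact Hc).
  assert (H2 : CV_radius (PS_incr_1 (PS_derive (PS_derive c))) = p_infty)
    by (rewrite CV_radius_incr_1, !CV_radius_derive; exact Hc).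
  assert (H0 : CV_radius (PS_incr_1 c) = p_infty) by (rewrite CV_radius_incr_1; exact Hc).
  pose proof (is_series_minus _ _ _ _
    (is_series_plus _ _ _ _
      (is_series_plus _ _ _ _
        (is_series_scal_l k _ _ (is_series_PSeries_entire _ u H1))
        (is_series_scal_l 4 _ _ (is_series_PSeries_entire _ u H2)))
      (is_series_scal_l (/ 4) _ _ (is_series_PSeries_entire _ u H0)))
    (is_series_scal_l a _ _ (is_series_PSeries_entire _ u Hc))) as Hsum.
  assert (Hzero : is_series (fun _ => 0)
     (k * PSeries (PS_derive c) u + 4 * PSeries (PS_incr_1 (PS_derive (PS_derive c))) u
      + / 4 * PSeries (PS_incr_1 c) u - a * PSeries c u)).
  { eapply is_series_ext; [|exact Hsum]. intros n. simpl.
    unfold plus, opp, scal; simpl; unfold plus, opp, mult; simpl.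
    transitivity ((k * PS_derive c n + 4 * PS_incr_1 (PS_derive (PS_derive c)) n
                   + / 4 * PS_incr_1 c n - a * c n) * u ^ n); [ring|].
    rewrite Hcoef. ring. }
  assert (Hnull : Series (fun _ : nat => 0) = 0).
  { rewrite (Series_ext _ (fun _ => 0 * 0)) by (intros; ring).
    rewrite Series_scal_l. ring. }
  rewrite (is_series_unique _ _ Hzero), !PSeries_incr_1 in Hnull.
  lra.
Qed.

Lemma is_derive_PSeries_sq (c : nat -> R) (x : R) : CV_radius c = p_infty ->
  is_derive (fun t => PSeries c (t ^ 2)) x (2 * x * PSeries (PS_derive c) (x ^ 2)).
Proof.
  intros Hc.
  assert (Hsq : is_derive (fun t : R => t ^ 2) x (2 * x)) by (auto_derive; [trivial | ring]).
  assert (HP : is_derive (PSeries c) (x ^ 2) (PSeries (PS_derive c) (x ^ 2)))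
    by (apply is_derive_PSeries; rewrite Hc; exact I).
  exact (is_derive_comp (PSeries c) (fun t => t ^ 2) x _ _ HP Hsq).
Qed.

(** * Solutions of the Weber equation *)

Definition solves_weber (a : R) (y dy : R -> R) : Prop :=
  forall t : R, is_derive y t (dy t) /\ is_derive dy t (- (t ^ 2 / 4 - a) * y t).

Lemma solves_weber_ext (a : R) (y z dy dz : R -> R) :
  (forall x, y x = z x) -> (forall x, dy x = dz x) ->
  solves_weber a y dy -> solves_weber a z dz.
Proof.
  intros Eyz Ed Hy t. destruct (Hy t) as [H1 H2]. split.
  - rewrite <- Ed. exact (is_derive_ext y z t _ Eyz H1).
  - rewrite <- Eyz. exact (is_derive_ext dy dz t _ Ed H2).
Qed.

Lemma solves_weber_lincomb (a p r : R) (u v du dv : R -> R) :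
  solves_weber a u du -> solves_weber a v dv ->
  solves_weber a (fun x => p * u x + r * v x) (fun x => p * du x + r * dv x).
Proof.
  intros Hu Hv t. destruct (Hu t) as [Hu1 Hu2]. destruct (Hv t) as [Hv1 Hv2]. split.
  - apply (is_derive_plus (fun x => p * u x)); apply is_derive_scal; assumption.
  - replace (- (t ^ 2 / 4 - a) * (p * u t + r * v t))
      with (p * (- (t ^ 2 / 4 - a) * u t) + r * (- (t ^ 2 / 4 - a) * v t)) by ring.
    apply (is_derive_plus (fun x => p * du x)); apply is_derive_scal; assumption.
Qed.

Lemma solves_weber_reflect (a : R) (y dy : R -> R) :
  solves_weber a y dy -> solves_weber a (fun x => y (- x)) (fun x => - dy (- x)).
Proof.
  intros Hy t. destruct (Hy (- t)) as [Hyt Hdt].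
  assert (Hopp : is_derive (fun x : R => - x) t (-1)) by (auto_derive; [trivial | ring]).
  split.
  - replace (- dy (- t)) with (-1 * dy (- t)) by ring.
    exact (is_derive_comp y (fun x => - x) t _ _ Hyt Hopp).
  - replace (- (t ^ 2 / 4 - a) * y (- t))
      with (- (-1 * (- ((- t) ^ 2 / 4 - a) * y (- t)))) by field.
    apply (is_derive_opp (fun x => dy (- x))).
    exact (is_derive_comp dy (fun x => - x) t _ _ Hdt Hopp).
Qed.

(* With u = x^2: (P(u))'' = 2 P'(u) + 4 u P''(u) and (x P(u))'' = x (6 P'(u) + 4 u P''(u)). *)
Lemma solves_weber_even (c : nat -> R) (a : R) : CV_radius c = p_infty ->
  (forall n, 2 * PS_derive c n + 4 * PS_incr_1 (PS_derive (PS_derive c)) n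
             + / 4 * PS_incr_1 c n - a * c n = 0) ->
  solves_weber a (fun x => PSeries c (x ^ 2)) (fun x => 2 * x * PSeries (PS_derive c) (x ^ 2)).
Proof.
  intros Hc Hcoef t. split; [apply is_derive_PSeries_sq, Hc|].
  assert (Hc' : CV_radius (PS_derive c) = p_infty) by (rewrite CV_radius_derive; exact Hc).
  replace (- (t ^ 2 / 4 - a) * PSeries c (t ^ 2))
    with (2 * PSeries (PS_derive c) (t ^ 2)
          + 2 * t * (2 * t * PSeries (PS_derive (PS_derive c)) (t ^ 2)))
    by (rewrite <- (PSeries_ode_of_coef c 2 a Hc Hcoef (t ^ 2)); ring).
  apply (is_derive_Rmult (fun x => 2 * x) (fun x => PSeries (PS_derive c) (x ^ 2)));
    [apply is_derive_linear | apply is_derive_PSeries_sq, Hc'].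
Qed.

Lemma solves_weber_odd (c : nat -> R) (a : R) : CV_radius c = p_infty ->
  (forall n, 6 * PS_derive c n + 4 * PS_incr_1 (PS_derive (PS_derive c)) n
             + / 4 * PS_incr_1 c n - a * c n = 0) ->
  solves_weber a (fun x => x * PSeries c (x ^ 2))
    (fun x => PSeries c (x ^ 2) + 2 * x ^ 2 * PSeries (PS_derive c) (x ^ 2)).
Proof.
  intros Hc Hcoef t.
  assert (Hc' : CV_radius (PS_derive c) = p_infty) by (rewrite CV_radius_derive; exact Hc).
  assert (Hsq : is_derive (fun x : R => 2 * x ^ 2) t (4 * t)) by (auto_derive; [trivial | ring]).
  split.
  - replace (PSeries c (t ^ 2) + 2 * t ^ 2 * PSeries (PS_derive c) (t ^ 2))
      with (1 * PSeries c (t ^ 2) + t * (2 * t * PSeries (PS_derive c) (t ^ 2))) by ring.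
    apply (is_derive_Rmult (fun x => x) (fun x => PSeries c (x ^ 2)));
      [apply (is_derive_id (K := R_AbsRing)) | apply is_derive_PSeries_sq, Hc].
  - replace (- (t ^ 2 / 4 - a) * (t * PSeries c (t ^ 2)))
      with (2 * t * PSeries (PS_derive c) (t ^ 2)
            + (4 * t * PSeries (PS_derive c) (t ^ 2)
               + 2 * t ^ 2 * (2 * t * PSeries (PS_derive (PS_derive c)) (t ^ 2))))
      by (match goal with |- ?A = ?B => change (@eq R A B) end;
          transitivity (t * (- (t ^ 2 / 4 - a) * PSeries c (t ^ 2))); [|ring];
          rewrite <- (PSeries_ode_of_coef c 6 a Hc Hcoef (t ^ 2)); ring).
    apply (is_derive_plus (fun x => PSeries c (x ^ 2))); [apply is_derive_PSeries_sq, Hc|].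
    apply (is_derive_Rmult (fun x => 2 * x ^ 2) (fun x => PSeries (PS_derive c) (x ^ 2)));
      [exact Hsq | apply is_derive_PSeries_sq, Hc'].
Qed.

Section WeberTail.

Variables (a : R) (y dy : R -> R).
Hypothesis y_solves : solves_weber a y dy.

Let T := 8 * Rabs a + 1.

Lemma T_ge_1 : 1 <= T.
Proof. unfold T. pose proof (Rabs_pos a). lra. Qed.

Lemma weber_potential_lower (t : R) : T <= t -> t ^ 2 / 8 <= t ^ 2 / 4 - a.
Proof. unfold T. intros Ht. pose proof (Rabs_pos a). pose proof (Rle_abs a). nra. Qed.

Lemma weber_potential_pos (t : R) : T <= t -> 0 < t ^ 2 / 4 - a.
Proof. intros Ht. pose proof (weber_potential_lower t Ht). pose proof T_ge_1. nra. Qed.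

Lemma Derive_weber (t : R) :
  Derive y t = dy t /\ Derive dy t = - (t ^ 2 / 4 - a) * y t.
Proof. destruct (y_solves t) as [Hy Hdy]. split; apply is_derive_unique; assumption. Qed.

Lemma ex_derive_weber (t : R) : ex_derive y t /\ ex_derive dy t.
Proof. destruct (y_solves t) as [Hy Hdy]. split; eexists; eassumption. Qed.

Let energy (t : R) : R := dy t ^ 2 / (t ^ 2 / 4 - a) + y t ^ 2.

Lemma energy_nonincreasing (t : R) : T <= t -> energy t <= energy T.
Proof.
  apply (le_of_derive_nonpos energy (fun t => - (dy t ^ 2 * (t / 2) / (t ^ 2 / 4 - a) ^ 2))).
  - intros s Hs. pose proof (weber_potential_pos s Hs).
    destruct (ex_derive_weber s). destruct (Derive_weber s) as [Ey Edy].
    unfold energy. auto_derive; [repeat split; auto; nra|].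
    change (Derive (fun x => y x) s) with (Derive y s).
    change (Derive (fun x => dy x) s) with (Derive dy s).
    rewrite Ey, Edy. field. nra.
  - intros s Hs. pose proof (weber_potential_pos s Hs). pose proof T_ge_1.
    assert (0 <= dy s ^ 2 * (s / 2) / (s ^ 2 / 4 - a) ^ 2); [|lra].
    apply Rmult_le_pos; [apply Rmult_le_pos; [apply pow2_ge_0 | lra]|].
    apply Rlt_le, Rinv_0_lt_compat, pow_lt. lra.
Qed.

Let C : R := energy T.

Lemma energy_T_nonneg : 0 <= C.
Proof.
  unfold C, energy. pose proof (weber_potential_pos T (Rle_refl T)).
  apply Rplus_le_le_0_compat; [|apply pow2_ge_0].
  apply Rmult_le_pos; [apply pow2_ge_0 | apply Rlt_le, Rinv_0_lt_compat; lra].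
Qed.

Lemma weber_solution_bound (t : R) : T <= t -> Rabs (y t) <= C + 1.
Proof.
  intros Ht. pose proof (energy_nonincreasing t Ht) as HE. fold C in HE. unfold energy in HE.
  pose proof (weber_potential_pos t Ht). pose proof energy_T_nonneg.
  assert (0 <= dy t ^ 2 / (t ^ 2 / 4 - a))
    by (apply Rmult_le_pos; [apply pow2_ge_0 | apply Rlt_le, Rinv_0_lt_compat; lra]).
  apply Rabs_le_of_sq_le; nra.
Qed.

Lemma weber_derivative_sq_bound (t : R) : T <= t -> dy t ^ 2 <= C * (t ^ 2 / 4 - a).
Proof.
  intros Ht. pose proof (energy_nonincreasing t Ht) as HE. fold C in HE. unfold energy in HE.
  pose proof (weber_potential_pos t Ht).
  assert (Hq : dy t ^ 2 / (t ^ 2 / 4 - a) <= C) by (pose proof (pow2_ge_0 (y t)); lra).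
  apply (Rmult_le_reg_r (/ (t ^ 2 / 4 - a))); [apply Rinv_0_lt_compat; lra|].
  replace (C * (t ^ 2 / 4 - a) * / (t ^ 2 / 4 - a)) with C by (field; lra). exact Hq.
Qed.

(* With q = t^2/4 - a, corrector' = - y + (q''/q^2 - 2 q'^2/q^3) y, and the last term is
   the remainder. *)
Let corrector (t : R) : R := dy t / (t ^ 2 / 4 - a) + y t * (t / 2) / (t ^ 2 / 4 - a) ^ 2.
Let remainder (t : R) : R := y t * (((t ^ 2 / 4 - a) / 2 - t ^ 2 / 2) / (t ^ 2 / 4 - a) ^ 3).

Lemma corrector_derive (t : R) : T <= t -> is_derive corrector t (remainder t - y t).
Proof.
  intros Ht. pose proof (weber_potential_pos t Ht).
  destruct (ex_derive_weber t). destruct (Derive_weber t) as [Ey Edy].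
  unfold corrector, remainder. auto_derive; [repeat split; auto; nra|].
  change (Derive (fun x => y x) t) with (Derive y t).
  change (Derive (fun x => dy x) t) with (Derive dy t).
  rewrite Ey, Edy. field. nra.
Qed.

Lemma remainder_continuous (t : R) : T <= t -> continuous remainder t.
Proof.
  intros Ht. pose proof (weber_potential_pos t Ht). destruct (ex_derive_weber t).
  apply ex_derive_continuous_R. unfold remainder. auto_derive.
  repeat split; auto; repeat apply Rmult_integral_contrapositive_currified; nra.
Qed.

Lemma remainder_bound (t : R) : T <= t -> Rabs (remainder t) <= 288 * (C + 1) / t ^ 2.
Proof.
  intros Ht. pose proof T_ge_1. apply Rabs_mul_div_cube_le;
    [lra | apply weber_potential_lower, Ht | apply weber_solution_bound, Ht].
Qed.

Lemma corrector_bound (t : R) : T <= t -> Rabs (corrector t) <= (8 * C + 1 + 32 * (C + 1)) / t.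
Proof.
  intros Ht. pose proof T_ge_1. pose proof energy_T_nonneg.
  unfold corrector. eapply Rle_trans; [apply Rabs_triang|].
  pose proof (Rabs_div_le_of_sq_le (dy t) _ t C ltac:(lra) (weber_potential_lower t Ht)
                energy_T_nonneg (weber_derivative_sq_bound t Ht)).
  pose proof (Rabs_div_sq_le (y t) (t ^ 2 / 4 - a) t (C + 1) ltac:(lra)
                (weber_potential_lower t Ht) (weber_solution_bound t Ht)).
  replace ((8 * C + 1 + 32 * (C + 1)) / t) with ((8 * C + 1) / t + 32 * (C + 1) / t)
    by (field; lra).
  lra.
Qed.

Lemma corrector_vanishes : is_lim corrector p_infty 0.
Proof.
  set (D := 8 * C + 1 + 32 * (C + 1)).
  apply (is_lim_le_le_loc (fun b => - D / b) (fun b => D / b)).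
  - exists T. intros b Hb.
    replace (- D / b) with (- (D / b)) by (field; pose proof T_ge_1; lra).
    apply Rabs_le_between, corrector_bound. lra.
  - apply is_lim_div_p_infty.
  - apply is_lim_div_p_infty.
Qed.

Theorem weber_integral_converges : exists L : R, is_lim (fun b => RInt y 0 b) p_infty L.
Proof.
  pose proof T_ge_1.
  assert (Hyc : forall t, continuous y t)
    by (intros t; exact (is_derive_continuous _ _ _ (proj1 (y_solves t)))).
  assert (Hex : forall u v, ex_RInt y u v) by (intros; apply ex_RInt_of_continuous, Hyc).
  destruct (ex_lim_RInt_tail remainder T (288 * (C + 1)) ltac:(lra)
              remainder_continuous remainder_bound) as [L HL].
  assert (Htail : forall b, T <= b ->
            RInt y T b = RInt remainder T b - (corrector b - corrector T)).
  { intros b Hb.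
    assert (Hcorr : is_RInt (fun t => remainder t - y t) T b (corrector b - corrector T)).
    { apply (is_RInt_derive corrector); intros x Hx; rewrite Rmin_left, ?Rmax_right in Hx by lra.
      - apply corrector_derive. lra.
      - apply (continuous_minus remainder y); [apply remainder_continuous; lra | apply Hyc]. }
    assert (Hrem : ex_RInt remainder T b)
      by (apply ex_RInt_continuous_R; [lra|]; intros; apply remainder_continuous; lra).
    pose proof (is_RInt_unique _ _ _ _ Hcorr) as E.
    pose proof (RInt_minus remainder y _ _ Hrem (Hex T b)) as Elin.
    unfold minus, plus, opp in Elin; simpl in Elin. unfold Rminus in E.
    rewrite Elin in E. lra. }
  exists (RInt y 0 T + L + corrector T).
  apply (is_lim_ext_loc (fun b => RInt y 0 T + RInt remainder T b - corrector b + corrector T)).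
  - exists T. intros b Hb.
    rewrite <- (RInt_Chasles y 0 T b (Hex 0 T) (Hex T b)), Htail by lra.
    unfold plus; simpl. ring.
  - replace (RInt y 0 T + L + corrector T) with (RInt y 0 T + L - 0 + corrector T) by ring.
    apply is_lim_plus'; [|apply is_lim_const].
    apply is_lim_minus'; [|exact corrector_vanishes].
    apply is_lim_plus'; [apply is_lim_const | exact HL].
Qed.

End WeberTail.

(** * The Weber function W *)

Lemma alpha_SS (a : R) (m : nat) : alpha a (S (S m)) =
  a * alpha a (S m) - / 2 * INR (m + 1) * INR (2 * m + 1) * alpha a m.
Proof. unfold alpha. simpl. destruct (alpha_pair a m). reflexivity. Qed.

Lemma beta_SS (a : R) (m : nat) : beta a (S (S m)) =
  a * beta a (S m) - / 2 * INR (m + 1) * INR (2 * m + 3) * beta a m.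
Proof. unfold beta. simpl. destruct (beta_pair a m). reflexivity. Qed.

Lemma alpha_growth (a : R) (n : nat) :
  Rabs (alpha a n) <= (Rabs a + 2) ^ n * INR (fact n).
Proof.
  apply two_term_recurrence_growth.
  - pose proof (Rabs_pos a); lra.
  - unfold alpha; simpl. rewrite Rabs_R1; lra.
  - unfold alpha; simpl. lra.
  - intros m. rewrite alpha_SS. replace (Rabs a + 2 - 2) with (Rabs a) by ring.
    apply Rabs_recurrence_le.
    rewrite !plus_INR, !mult_INR, (S_INR m).
    replace (INR 1) with 1 by reflexivity. replace (INR 2) with 2 by (simpl; ring).
    pose proof (pos_INR m). split; nra.
Qed.

Lemma beta_growth (a : R) (n : nat) :
  Rabs (beta a n) <= (Rabs a + 2) ^ n * INR (fact n).
Proof.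
  apply two_term_recurrence_growth.
  - pose proof (Rabs_pos a); lra.
  - unfold beta; simpl. rewrite Rabs_R1; lra.
  - unfold beta; simpl. lra.
  - intros m. rewrite beta_SS. replace (Rabs a + 2 - 2) with (Rabs a) by ring.
    apply Rabs_recurrence_le.
    rewrite !plus_INR, !mult_INR, (S_INR m).
    replace (INR 1) with 1 by reflexivity. replace (INR 2) with 2 by (simpl; ring).
    replace (INR 3) with 3 by (simpl; ring).
    pose proof (pos_INR m). split; nra.
Qed.

Definition even_coef (a : R) (n : nat) : R := alpha a n / INR (fact (2 * n)).
Definition odd_coef (a : R) (n : nat) : R := beta a n / INR (fact (2 * n + 1)).

Lemma CV_radius_even_coef (a : R) : CV_radius (even_coef a) = p_infty.
Proof.
  apply (CV_radius_infinite_of_exp_bound _ (Rabs a + 2)); [pose proof (Rabs_pos a); lra|].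
  intros n. apply Rabs_div_fact_sq_le; [apply alpha_growth|].
  rewrite <- mult_INR. apply le_INR, fact_sq_le_fact_double.
Qed.

Lemma CV_radius_odd_coef (a : R) : CV_radius (odd_coef a) = p_infty.
Proof.
  apply (CV_radius_infinite_of_exp_bound _ (Rabs a + 2)); [pose proof (Rabs_pos a); lra|].
  intros n. apply Rabs_div_fact_sq_le; [apply beta_growth|].
  rewrite <- mult_INR. apply le_INR.
  eapply Nat.le_trans; [apply fact_sq_le_fact_double | apply fact_le; lia].
Qed.

Lemma even_coef_ode (a : R) (n : nat) :
  2 * PS_derive (even_coef a) n + 4 * PS_incr_1 (PS_derive (PS_derive (even_coef a))) n
  + / 4 * PS_incr_1 (even_coef a) n - a * even_coef a n = 0.
Proof.
  destruct n as [|m].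
  - unfold PS_derive, PS_incr_1, even_coef, alpha. simpl. unfold zero; simpl. field.
  - unfold PS_derive, PS_incr_1, even_coef. rewrite alpha_SS.
    replace (2 * S (S m))%nat with (S (S (2 * S m))) by lia.
    replace (2 * S m)%nat with (S (S (2 * m))) by lia.
    rewrite !INR_fact_SS, !S_INR, !plus_INR, !mult_INR.
    replace (INR 1) with 1 by reflexivity. replace (INR 2) with 2 by (simpl; ring).
    pose proof (INR_fact_lt_0 (2 * m)). pose proof (pos_INR m).
    field. repeat split; lra.
Qed.

Lemma odd_coef_ode (a : R) (n : nat) :
  6 * PS_derive (odd_coef a) n + 4 * PS_incr_1 (PS_derive (PS_derive (odd_coef a))) n
  + / 4 * PS_incr_1 (odd_coef a) n - a * odd_coef a n = 0.
Proof.
  destruct n as [|m].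
  - unfold PS_derive, PS_incr_1, odd_coef, beta. simpl. unfold zero; simpl. field.
  - unfold PS_derive, PS_incr_1, odd_coef. rewrite beta_SS.
    replace (2 * S (S m) + 1)%nat with (S (S (2 * S m + 1))) by lia.
    replace (2 * S m + 1)%nat with (S (S (2 * m + 1))) by lia.
    rewrite !INR_fact_SS, !S_INR, !plus_INR, !mult_INR.
    replace (INR 1) with 1 by reflexivity. replace (INR 2) with 2 by (simpl; ring).
    replace (INR 3) with 3 by (simpl; ring).
    pose proof (INR_fact_lt_0 (2 * m + 1)). pose proof (pos_INR m).
    field. repeat split; lra.
Qed.

Lemma y1_PSeries (a x : R) : y1 a x = PSeries (even_coef a) (x ^ 2).
Proof.
  unfold y1, PSeries. apply Series_ext. intros n. unfold even_coef.
  rewrite pow_mult. pose proof (INR_fact_neq_0 (2 * n)). field. exact H.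
Qed.

Lemma y2_PSeries (a x : R) : y2 a x = x * PSeries (odd_coef a) (x ^ 2).
Proof.
  unfold y2, PSeries. rewrite <- Series_scal_l. apply Series_ext. intros n. unfold odd_coef.
  rewrite pow_add, pow_mult. pose proof (INR_fact_neq_0 (2 * n + 1)). field. exact H.
Qed.

Definition W_deriv (a x : R) : R :=
  Rpower 2 (- (3/4)) * sqrt (G1 a / G3 a) * (2 * x * PSeries (PS_derive (even_coef a)) (x ^ 2))
  - Rpower 2 (- (3/4)) * sqrt (2 * G3 a / G1 a)
    * (PSeries (odd_coef a) (x ^ 2) + 2 * x ^ 2 * PSeries (PS_derive (odd_coef a)) (x ^ 2)).

Lemma W_solves_weber (a : R) : solves_weber a (W a) (W_deriv a).
Proof.
  set (k1 := Rpower 2 (- (3/4)) * sqrt (G1 a / G3 a)).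
  set (k2 := Rpower 2 (- (3/4)) * sqrt (2 * G3 a / G1 a)).
  apply (solves_weber_ext a
    (fun x => k1 * PSeries (even_coef a) (x ^ 2) + - k2 * (x * PSeries (odd_coef a) (x ^ 2)))
    _ (fun x => k1 * (2 * x * PSeries (PS_derive (even_coef a)) (x ^ 2))
      + - k2 * (PSeries (odd_coef a) (x ^ 2)
                + 2 * x ^ 2 * PSeries (PS_derive (odd_coef a)) (x ^ 2)))).
  - intros x. unfold W, k1, k2. rewrite y1_PSeries, y2_PSeries. ring.
  - intros x. unfold W_deriv, k1, k2. ring.
  - apply solves_weber_lincomb.
    + apply solves_weber_even; [apply CV_radius_even_coef | apply even_coef_ode].
    + apply solves_weber_odd; [apply CV_radius_odd_coef | apply odd_coef_ode].
Qed.

Lemma W_at_0 (a : R) : W a 0 = Rpower 2 (- (3/4)) * sqrt (G1 a / G3 a).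
Proof.
  unfold W. rewrite y1_PSeries, y2_PSeries. replace (0 ^ 2) with 0 by ring.
  rewrite PSeries_0. replace (even_coef a 0) with 1 by (unfold even_coef, alpha; simpl; field).
  ring.
Qed.

Lemma W_deriv_at_0 (a : R) : W_deriv a 0 = - (Rpower 2 (- (3/4)) * sqrt (2 * G3 a / G1 a)).
Proof.
  unfold W_deriv. replace (0 ^ 2) with 0 by ring.
  rewrite !PSeries_0. replace (odd_coef a 0) with 1 by (unfold odd_coef, beta; simpl; field).
  ring.
Qed.

Lemma W_wronskian (a : R) : 0 < G1 a -> 0 < G3 a -> W a 0 * W_deriv a 0 = - / 2.
Proof.
  intros H1 H3. rewrite W_at_0, W_deriv_at_0.
  transitivity (- (Rpower 2 (- (3/4)) * Rpower 2 (- (3/4))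
                   * sqrt (G1 a / G3 a * (2 * G3 a / G1 a)))).
  { rewrite sqrt_mult_alt; [ring|]. apply Rlt_le, Rdiv_lt_0_compat; assumption. }
  replace (G1 a / G3 a * (2 * G3 a / G1 a)) with 2 by (field; lra).
  rewrite <- Rpower_plus, <- Rpower_sqrt by lra. rewrite <- Rpower_plus.
  replace (- (3 / 4) + - (3 / 4) + / 2) with (Ropp 1) by field.
  rewrite Rpower_Ropp, Rpower_1 by lra. reflexivity.
Qed.

(* G1 and G3 are moduli of Gamma values, whose positivity is not derived from their integral
   definitions; if one of them is 0, both square roots in W are 0 since x / 0 = 0. *)
Lemma W_degenerate (a : R) : ~ (0 < G1 a /\ 0 < G3 a) -> forall x, W a x = 0.
Proof.
  intros Hdeg x.
  assert (P1 : 0 <= G1 a) by (unfold G1, Gamma_abs; apply sqrt_pos).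
  assert (P3 : 0 <= G3 a) by (unfold G3, Gamma_abs; apply sqrt_pos).
  assert (Hzero : G1 a = 0 \/ G3 a = 0) by (destruct (Req_dec (G1 a) 0); [left | right]; nra).
  assert (Hq1 : G1 a / G3 a = 0)
    by (unfold Rdiv; destruct Hzero as [-> | ->]; rewrite ?Rinv_0; ring).
  assert (Hq2 : 2 * G3 a / G1 a = 0)
    by (unfold Rdiv; destruct Hzero as [-> | ->]; rewrite ?Rinv_0; ring).
  unfold W. rewrite Hq1, Hq2, sqrt_0. ring.
Qed.

(** * Nield-Kuznetsov functions *)

Definition nk_first (w : R -> R) (x : R) : R :=
  w x * RInt (fun t => w (- t)) 0 x - w (- x) * RInt w 0 x.

Definition nk_complementary (w : R -> R) (x : R) : R :=
  w x * RInt_gen (fun t => w (- t)) (at_point x) (Rbar_locally p_infty)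
  - w (- x) * RInt_gen w (at_point x) (Rbar_locally p_infty).

Section NieldKuznetsov.

Variables (a : R) (w dw : R -> R).
Hypothesis w_solves : solves_weber a w dw.

Lemma weber_continuous (t : R) : continuous w t.
Proof. exact (is_derive_continuous _ _ _ (proj1 (w_solves t))). Qed.

Lemma weber_reflect_continuous (t : R) : continuous (fun s => w (- s)) t.
Proof. exact (is_derive_continuous _ _ _ (proj1 (solves_weber_reflect a w dw w_solves t))). Qed.

Lemma nk_first_at_0 : nk_first w 0 = 0.
Proof. unfold nk_first. rewrite !RInt_point_R. ring. Qed.

Lemma nk_first_derive (x : R) : is_derive (nk_first w) x
  (dw x * RInt (fun t => w (- t)) 0 x + dw (- x) * RInt w 0 x).
Proof.
  destruct (w_solves x) as [Hw _].
  destruct (solves_weber_reflect a w dw w_solves x) as [Hwr _].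
  replace (dw x * RInt (fun t => w (- t)) 0 x + dw (- x) * RInt w 0 x)
    with (dw x * RInt (fun t => w (- t)) 0 x + w x * w (- x)
          - (- dw (- x) * RInt w 0 x + w (- x) * w x)) by ring.
  unfold nk_first.
  apply (is_derive_minus (fun x => w x * RInt (fun t => w (- t)) 0 x)
                         (fun x => w (- x) * RInt w 0 x)).
  - apply (is_derive_Rmult w (fun x => RInt (fun t => w (- t)) 0 x)); [exact Hw |].
    apply (is_derive_RInt_from_0 (fun t => w (- t))), weber_reflect_continuous.
  - apply (is_derive_Rmult (fun x => w (- x)) (fun x => RInt w 0 x)); [exact Hwr |].
    apply is_derive_RInt_from_0, weber_continuous.
Qed.

Lemma coefficients_of_initial_data (A B : R) (f : R -> R) :
  w 0 * dw 0 = - / 2 ->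
  (forall x, f x = A * w x + B * w (- x) - nk_first w x) ->
  - Derive f 0 * w 0 - f 0 * Derive w 0 = A /\ Derive f 0 * w 0 - f 0 * Derive w 0 = B.
Proof.
  intros Hwr Hf.
  destruct (w_solves 0) as [Hw _].
  destruct (solves_weber_reflect a w dw w_solves 0) as [Hwm _].
  assert (Hf' : is_derive f 0 (A * dw 0 + B * - dw (- 0) - 0)).
  { apply (is_derive_ext (fun x => A * w x + B * w (- x) - nk_first w x));
      [intros; symmetry; apply Hf|].
    pose proof (nk_first_derive 0) as HN. rewrite !RInt_point_R, !Rmult_0_r, Rplus_0_r in HN.
    apply (is_derive_minus _ _ _ _ _ (is_derive_plus _ _ _ _ _ (is_derive_scal _ _ A _ Hw)
                                        (is_derive_scal _ _ B _ Hwm)) HN). }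
  rewrite (is_derive_unique _ _ _ Hf'), (is_derive_unique _ _ _ Hw), Hf, nk_first_at_0.
  rewrite Ropp_0 in *. split.
  - transitivity (- 2 * (w 0 * dw 0) * A); [ring | rewrite Hwr; field].
  - transitivity (- 2 * (w 0 * dw 0) * B); [ring | rewrite Hwr; field].
Qed.

Lemma nk_complementary_decomposition :
  exists Lp Lm : R, forall x, nk_complementary w x = Lm * w x + - Lp * w (- x) - nk_first w x.
Proof.
  destruct (weber_integral_converges a w dw w_solves) as [Lp HLp].
  destruct (weber_integral_converges a _ _ (solves_weber_reflect a w dw w_solves)) as [Lm HLm].
  exists Lp, Lm. intros x. unfold nk_complementary, nk_first.
  rewrite (is_RInt_gen_unique _ _ (is_RInt_gen_of_lim w Lp weber_continuous HLp x)).
  replace (RInt_gen (fun t => w (- t)) (at_point x) (Rbar_locally p_infty))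
    with (Lm - RInt (fun t => w (- t)) 0 x)
    by (symmetry; apply is_RInt_gen_unique, is_RInt_gen_of_lim;
        [apply weber_reflect_continuous | exact HLm]).
  ring.
Qed.

Theorem nk_first_eq : w 0 * dw 0 = - / 2 -> forall x,
  nk_first w x =
    (- Derive (nk_complementary w) 0 * w 0 - nk_complementary w 0 * Derive w 0) * w x
  + (Derive (nk_complementary w) 0 * w 0 - nk_complementary w 0 * Derive w 0) * w (- x)
  - nk_complementary w x.
Proof.
  intros Hwr x.
  destruct nk_complementary_decomposition as [Lp [Lm HN]].
  destruct (coefficients_of_initial_data Lm (- Lp) _ Hwr HN) as [-> ->].
  rewrite HN. ring.
Qed.

End NieldKuznetsov.

Theorem lemma2p2 (a x : R) :
  NW a x = c0p a * W a x + c0m a * W a (- x) - NWhat a x.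
Proof.
  destruct (classic (0 < G1 a /\ 0 < G3 a)) as [[H1 H3] | Hdeg].
  - exact (nk_first_eq a (W a) (W_deriv a) (W_solves_weber a) (W_wronskian a H1 H3) x).
  - unfold NW, NWhat. rewrite !(W_degenerate a Hdeg). ring.
Qed.
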